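(* Assume $\mathrm{char}\,K\ne2$, $\prod_{i=1}^{n-1}(1+q^i)=0$, and $\mathcal H(D_n)$, $\mathcal H(D_{n-1})$ are split over $K$. Let $\lambda\in\mathcal P_n$ with $\lambda=h(\lambda)$. Then there is an $\mathcal H(D_{n-1})$-module isomorphism $$\mathrm{soc}\bigl(D_+^{\lambda}\!\downarrow_{\mathcal H(D_{n-1})}\bigr)\cong\mathrm{soc}\bigl(D_-^{\lambda}\!\downarrow_{\mathcal H(D_{n-1})}\bigr).$$
   Context: $K$ is a field, $q\in K^\times$ (a primitive $2\ell$-th root of unity under the hypotheses). $\mathcal H(B_m)$ is the $K$-algebra with generators $T_0,\dots,T_{m-1}$ and relations $T_0^2=1$; $(T_i+1)(T_i-q)=0$ for $1\le i\le m-1$; $T_0T_1T_0T_1=T_1T_0T_1T_0$; $T_iT_{i+1}T_i=T_{i+1}T_iT_{i+1}$; $T_iT_j=T_jT_i$ for $|i-j|>1$. $\mathcal H(D_m)$ is the subalgebra generated by $T_0T_1T_0,T_1,\dots,T_{m-1}$; $\mathcal H(D_{n-1})\subset\mathcal H(D_n)$ via generators of index $\le n-2$. For a bipartition $\lambda$ of $m$, $\tilde D^\lambda$ is the simple head of the Dipper–James–Mathas Specht module and $\mathcal P_m=\{\lambda:\tilde D^\lambda\ne0\}$. With $\sigma(T_0)=-T_0$, $\sigma(T_i)=T_i$ ($i\ne0$), $h$ is the involution of $\mathcal P_m$ with $(\tilde D^\lambda)^\sigma\cong\tilde D^{h(\lambda)}$. When $\mathcal H(D_n)$ is split and $\lambda=h(\lambda)$,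 $\tilde D^\lambda\!\downarrow_{\mathcal H(D_n)}=D_+^\lambda\oplus D_-^\lambda$ with $D_\pm^\lambda$ non-isomorphic irreducible $\mathcal H(D_n)$-modules. *)

From HB Require Import structures.
From mathcomp Require Import all_boot all_order all_algebra.
Set Implicit Arguments. Unset Strict Implicit. Unset Printing Implicit Defensive.
Import GRing.Theory.
Local Open Scope ring_scope.

(* Conventions: modules are RIGHT modules realised on row vectors K^d;
   a generator acts by right multiplication by a d x d matrix, so the
   matrix of a product T_a T_b is (T a) *m (T b).  Submodules are row
   spaces of d x d matrices (mxalgebra, %MS scope). *)

Section Defs.
Variable K : fieldType.

Definition invariant d (gens : seq 'M[K]_d) (Y : 'M[K]_d) : bool :=
  all (fun g => (Y *m g <= Y)%MS) gens.

Definition simple_sub d (gens : seq 'M[K]_d) (X : 'M[K]_d) : Prop :=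
  [/\ invariant gens X, (0 < \rank X)%N &
      forall Y : 'M[K]_d, invariant gens Y -> (Y <= X)%MS ->
        (Y == (0 : 'M[K]_d))%MS \/ (X <= Y)%MS].

Definition modiso d (gens : seq 'M[K]_d) (W1 W2 : 'M[K]_d) : Prop :=
  exists f : 'M[K]_d,
    [/\ (W1 *m f == W2)%MS, \rank (W1 *m f) = \rank W1 &
        forall g, g \in gens -> W1 *m g *m f = W1 *m f *m g].

Definition is_socle d (gens : seq 'M[K]_d) (U W : 'M[K]_d) : Prop :=
  [/\ (W <= U)%MS,
      (exists s : seq 'M[K]_d,
          (forall X, X \in s -> simple_sub gens X /\ (X <= U)%MS) /\
          (W == \sum_(X <- s) X)%MS) &
      forall X, simple_sub gens X -> (X <= U)%MS -> (X <= W)%MS].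

Definition repB (q : K) (n : nat) d (T : nat -> 'M[K]_d) : Prop :=
  [/\ (0 < n)%N -> T 0 *m T 0 = 1%:M,
      forall i, (1 <= i < n)%N -> (T i + 1%:M) *m (T i - q%:M) = 0,
      (1 < n)%N -> T 0 *m T 1 *m T 0 *m T 1 = T 1 *m T 0 *m T 1 *m T 0,
      forall i, (1 <= i)%N -> (i.+1 < n)%N ->
        T i *m T i.+1 *m T i = T i.+1 *m T i *m T i.+1 &
      forall i j, (j < n)%N -> (i.+1 < j)%N -> T i *m T j = T j *m T i].

Definition gensB n d (T : nat -> 'M[K]_d) : seq 'M[K]_d := [seq T i | i <- iota 0 n].

Definition gensD m d (T : nat -> 'M[K]_d) : seq 'M[K]_d :=
  T 0 *m T 1 *m T 0 :: [seq T i | i <- iota 1 m.-1].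

Definition sigmaT d (T : nat -> 'M[K]_d) : nat -> 'M[K]_d :=
  fun i => if i == 0%N then - T 0 else T i.

Definition sigma_stable n d (T : nat -> 'M[K]_d) : Prop :=
  exists P : 'M[K]_d, P \in unitmx /\
    forall i, (i < n)%N -> T i *m P = P *m sigmaT T i.

(* Presentation of the type-D Iwahori-Hecke algebra H(D_m) (m >= 1):
   X 0 plays the role of T_0T_1T_0, X i (1 <= i < m) of T_i. *)
Definition repD (q : K) (m : nat) d (X : nat -> 'M[K]_d) : Prop :=
  [/\ forall i, (i < m)%N -> (X i + 1%:M) *m (X i - q%:M) = 0,
      forall i, (1 <= i)%N -> (i.+1 < m)%N ->
        X i *m X i.+1 *m X i = X i.+1 *m X i *m X i.+1,
      forall i j, (1 <= i)%N -> (j < m)%N -> (i.+1 < j)%N ->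
        X i *m X j = X j *m X i,
      (1 < m)%N -> X 0 *m X 1 = X 1 *m X 0 &
      (2 < m)%N -> X 0 *m X 2 *m X 0 = X 2 *m X 0 *m X 2] /\
  (forall j, (3 <= j < m)%N -> X 0 *m X j = X j *m X 0).

Definition split_HD (q : K) (m : nat) : Prop :=
  forall d (X : nat -> 'M[K]_d), repD q m X ->
    simple_sub [seq X i | i <- iota 0 m] 1%:M ->
    forall A : 'M[K]_d, (forall i, (i < m)%N -> A *m X i = X i *m A) ->
      exists c : K, A = c%:M.

End Defs.

(* Conjugation by T_0 permutes the generators of H(D_n), so U T_0 is an H(D_n)-submodule
   along with U.  For a simple H(D_n)-submodule U, U T_0 meets U trivially: otherwise
   U T_0 = U, and U would be a proper H(B_n)-submodule.  Suppose X is a unit with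
   U X <= U T_0 which commutes on U with H(D_{n-1}), for every simple U.  Then X followed
   by the projection onto D_- along D_+ is an injective H(D_{n-1})-homomorphism
   D_+ -> D_-, and symmetrically D_- -> D_+.  Injective homomorphisms carry simple
   submodules to simple submodules, hence socles into socles, and comparing ranks makes
   the restriction to the socle an isomorphism.  For n >= 3 take X = L_{n-1}, since
   T_0 L_{n-1} lies in H(D_n) and L_{n-1} centralises H(B_{n-1}).  For n = 2 the
   hypothesis forces q = -1; then T_1 and T_0 T_1 T_0 act by -1 on every simple
   H(D_2)-module, and X = T_0 works. *)

From Pilot Require Import Defs.
From mathcomp Require Import all_boot all_order all_algebra zify.
Import GRing.Theory.
Local Open Scope ring_scope.

Section Modules.
Local Set Implicit Arguments. Local Unset Strict Implicit.
Variables (K : fieldType) (d : nat).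
Implicit Types (gens gensN gensS : seq 'M[K]_d) (U V W X D F P A g : 'M[K]_d).

Lemma invariant_submx gens U W g :
  Defs.invariant gens U -> g \in gens -> (W <= U)%MS -> (W *m g <= U)%MS.
Proof. by move=> /allP HU /HU gU WU; apply: submx_trans (submxMr g WU) gU. Qed.

Lemma invariant_cap gens U V :
  Defs.invariant gens U -> Defs.invariant gens V -> Defs.invariant gens (U :&: V)%MS.
Proof.
move=> HU HV; apply/allP=> g Hg; rewrite sub_capmx.
by rewrite (invariant_submx HU Hg (capmxSl _ _)) (invariant_submx HV Hg (capmxSr _ _)).
Qed.

Lemma invariant_conj gens P U :
  P *m P = 1%:M -> (forall g, g \in gens -> P *m g *m P \in gens) ->
  Defs.invariant gens U -> Defs.invariant gens (U *m P).
Proof.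
move=> PP HP HU; apply/allP=> g Hg.
have -> : U *m P *m g = U *m (P *m g *m P) *m P.
  by rewrite !mulmxA -(mulmxA _ P P) PP mulmx1.
exact/submxMr/(invariant_submx HU (HP g Hg) (submx_refl U)).
Qed.

Lemma intertwine_submx gens U W F :
  (forall g, g \in gens -> U *m g *m F = U *m F *m g) -> (W <= U)%MS ->
  forall g, g \in gens -> W *m g *m F = W *m F *m g.
Proof. by move=> HF /submxP [A ->] g Hg; rewrite -!mulmxA !(mulmxA U) HF. Qed.

Lemma mxrank_mul_cap_kermx0 U W F :
  (U :&: kermx F)%MS = 0 -> (W <= U)%MS -> \rank (W *m F) = \rank W.
Proof.
move=> UF0 WU; have := mxrank_mul_ker W F.
have /submx0null -> : (W :&: kermx F <= (0 : 'M[K]_d))%MS by rewrite -UF0 capmxS.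
by rewrite mxrank0 addn0.
Qed.

Lemma simple_sub_mulmx gens D F X :
  (forall g, g \in gens -> D *m g *m F = D *m F *m g) ->
  (D :&: kermx F)%MS = 0 ->
  simple_sub gens X -> (X <= D)%MS -> simple_sub gens (X *m F).
Proof.
move=> HF DF0 [HX Xpos Xmin] XD; have HXF := intertwine_submx HF XD.
split; first by apply/allP=> g Hg; rewrite -HXF //; apply/submxMr/(allP HX).
  by rewrite (mxrank_mul_cap_kermx0 DF0 XD).
move=> Y HY YXF.
pose Y' := (X :&: kermx (F *m cokermx Y))%MS.
have Y'X : (Y' <= X)%MS := capmxSl _ _.
have preimY : forall Z : 'M[K]_d, (Z <= X)%MS -> (Z <= Y')%MS = (Z *m F <= Y)%MS.
  by move=> Z ZX; rewrite sub_capmx ZX sub_kermx submxE mulmxA.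
have HY' : Defs.invariant gens Y'.
  apply/allP=> g Hg; have Y'gX := invariant_submx HX Hg Y'X.
  rewrite preimY // (intertwine_submx HXF Y'X) //.
  by apply: invariant_submx HY Hg _; rewrite -preimY.
case: (Xmin Y' HY' Y'X) => [/eqmx0P Y'0|XY']; last by right; rewrite -preimY.
left; apply/eqmx0P; case/submxP: YXF => A EY.
have : (A *m X <= Y')%MS by rewrite preimY ?submxMl // EY -mulmxA submx_refl.
by rewrite Y'0 submx0 EY mulmxA => /eqP ->; rewrite mul0mx.
Qed.

Lemma socle_mulmx_sub gens Dp Dm Wp Wm F :
  (forall g, g \in gens -> Dp *m g *m F = Dp *m F *m g) ->
  (Dp :&: kermx F)%MS = 0 -> (Dp *m F <= Dm)%MS ->
  is_socle gens Dp Wp -> is_socle gens Dm Wm -> (Wp *m F <= Wm)%MS.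
Proof.
move=> HF DF0 DpF [_ [s [Hs /andP [Ws _]]] _] [_ _ Wmax].
apply: submx_trans (submxMr F Ws) _; rewrite big_seq.
apply: (big_ind (fun S => (S *m F <= Wm)%MS)) => [|S1 S2 HS1 HS2|X /Hs [HX XD]].
- by rewrite mul0mx sub0mx.
- by rewrite addsmxMr addsmx_sub HS1 HS2.
apply: Wmax; first exact: simple_sub_mulmx HF DF0 HX XD.
exact: submx_trans (submxMr F XD) DpF.
Qed.

Lemma proj_mx_comm U V g :
  (U :&: V)%MS = 0 -> (U + V == 1%:M)%MS -> stablemx U g -> stablemx V g ->
  comm_mx g (proj_mx U V).
Proof.
move=> UV0 /andP [_ /sub_addsmxP [[a b] /= E]] Ug Vg.
rewrite /comm_mx -[g *m _]mul1mx -[proj_mx U V *m g]mul1mx E !mulmxDl.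
rewrite ![_ *m (g *m _)]mulmxA ![_ *m (proj_mx U V *m _)]mulmxA.
rewrite (proj_mx_id UV0 (submxMl a U)) (proj_mx_0 UV0 (submxMl b V)) mul0mx addr0.
rewrite (proj_mx_id UV0 (submx_trans (submxMr g (submxMl a U)) Ug)).
by rewrite (proj_mx_0 UV0 (submx_trans (submxMr g (submxMl b V)) Vg)) addr0.
Qed.

Lemma cap_kermx_mul_proj U V X :
  (U :&: V)%MS = 0 -> (U + V == 1%:M)%MS -> X \in unitmx ->
  (U *m X :&: U <= (0 : 'M[K]_d))%MS -> (U :&: kermx (X *m proj_mx V U))%MS = 0.
Proof.
move=> UV0 UV1 Xu UXU; apply/eqP; rewrite -submx0.
set z := (U :&: kermx _)%MS.
have zXP : z *m X *m proj_mx V U = 0.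
  by rewrite -mulmxA; apply/sub_kermxP/capmxSr.
have zX_U : (z *m X <= U)%MS.
  have zX1 : (z *m X <= V + U)%MS.
    by case/andP: UV1 => _ UV1; rewrite addsmxC; apply: submx_trans (submx1 _) UV1.
  by have := proj_mx_compl_sub zX1; rewrite zXP subr0.
have : (z *m X <= (0 : 'M[K]_d))%MS.
  by apply: (submx_trans _ UXU); rewrite sub_capmx zX_U andbT submxMr ?capmxSl.
by move/submx0null=> zX0; rewrite -(mulmxK Xu z) zX0 mul0mx sub0mx.
Qed.

Lemma twist_proj_intertwiner gensN gensS U V X :
  (U :&: V)%MS = 0 -> (U + V == 1%:M)%MS ->
  Defs.invariant gensN U -> Defs.invariant gensN V -> {subset gensS <= gensN} ->
  X \in unitmx -> (U *m X :&: U <= (0 : 'M[K]_d))%MS ->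
  (forall g, g \in gensS -> U *m g *m X = U *m X *m g) ->
  let F := X *m proj_mx V U in
  [/\ forall g, g \in gensS -> U *m g *m F = U *m F *m g,
      (U :&: kermx F)%MS = 0 & (U *m F <= V)%MS].
Proof.
move=> UV0 UV1 HU HV sSN Xu UXU HX F; split.
- move=> g Hg; have gN := sSN g Hg.
  have Pg : comm_mx g (proj_mx V U).
    apply: proj_mx_comm; [by rewrite capmxC | by rewrite addsmxC | |].
    - exact: (allP HV).
    - exact: (allP HU).
  rewrite /F; move: (proj_mx V U) Pg => P Pg.
  by rewrite !mulmxA HX // -[U *m X *m g *m P]mulmxA Pg !mulmxA.
- exact: cap_kermx_mul_proj.
- by rewrite mulmxA proj_mx_sub.
Qed.

Lemma modiso_socle_twist gensN gensS Dp Dm Wp Wm X :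
  (Dp :&: Dm)%MS = 0 -> (Dp + Dm == 1%:M)%MS ->
  Defs.invariant gensN Dp -> Defs.invariant gensN Dm -> {subset gensS <= gensN} ->
  X \in unitmx ->
  (Dp *m X :&: Dp <= (0 : 'M[K]_d))%MS -> (Dm *m X :&: Dm <= (0 : 'M[K]_d))%MS ->
  (forall g, g \in gensS -> Dp *m g *m X = Dp *m X *m g) ->
  (forall g, g \in gensS -> Dm *m g *m X = Dm *m X *m g) ->
  is_socle gensS Dp Wp -> is_socle gensS Dm Wm -> modiso gensS Wp Wm.
Proof.
move=> DpDm0 DpDm1 HDp HDm sSN Xu DpX DmX HXp HXm HWp HWm.
have DmDp0 : (Dm :&: Dp)%MS = 0 by rewrite capmxC.
have DmDp1 : (Dm + Dp == 1%:M)%MS by rewrite addsmxC.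
have [Fp_comm Fp_ker Fp_sub] :=
  twist_proj_intertwiner DpDm0 DpDm1 HDp HDm sSN Xu DpX HXp.
have [Fm_comm Fm_ker Fm_sub] :=
  twist_proj_intertwiner DmDp0 DmDp1 HDm HDp sSN Xu DmX HXm.
have [[WpD _ _] [WmD _ _]] := (HWp, HWm).
have WpF := socle_mulmx_sub Fp_comm Fp_ker Fp_sub HWp HWm.
have WmF := socle_mulmx_sub Fm_comm Fm_ker Fm_sub HWm HWp.
have rWp := mxrank_mul_cap_kermx0 Fp_ker WpD.
have rWm := mxrank_mul_cap_kermx0 Fm_ker WmD.
exists (X *m proj_mx Dm Dp); split=> //.
- rewrite -(mxrank_leqif_eq WpF).2 rWp eqn_leq -{1}rWp mxrankS //=.
  by rewrite -rWm mxrankS.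
- by move=> g Hg; rewrite (intertwine_submx Fp_comm WpD).
Qed.

Lemma simple_sub_unipotent gens U A :
  simple_sub gens U -> A \in gens -> (forall g, g \in gens -> comm_mx A g) ->
  (A + 1%:M) *m (A + 1%:M) = 0 -> U *m A = - U.
Proof.
move=> [HU Upos Umin] HA Acomm AA; set N := A + 1%:M.
have UN : (U *m N <= U)%MS.
  by rewrite mulmxDr mulmx1 addmx_sub ?submx_refl // (allP HU).
have HUN : Defs.invariant gens (U *m N).
  apply/allP=> g Hg; rewrite -mulmxA.
  have -> : N *m g = g *m N by rewrite /N mulmxDl mulmxDr mul1mx mulmx1 Acomm.
  by rewrite mulmxA submxMr // (allP HU).
case: (Umin _ HUN UN) => [/eqmx0P UN0|UUN].
  by apply/eqP; rewrite -subr_eq0 opprK -{2}[U]mulmx1 -mulmxDr UN0.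
have := submxMr N UUN; rewrite -mulmxA AA mulmx0 submx0 => /eqP UN0.
by move: Upos UUN; rewrite UN0 => /[swap] /submx0null ->; rewrite mxrank0.
Qed.

Lemma unitmx_quadratic (q : K) A :
  q != 0 -> (A + 1%:M) *m (A - q%:M) = 0 -> A \in unitmx.
Proof.
move=> q0 AA; suff : A *m (q^-1 *: (A + (1 - q)%:M)) = 1%:M by case/mulmx1_unit.
rewrite -scalemxAr.
have -> : A *m (A + (1 - q)%:M) = (A + 1%:M) *m (A - q%:M) + q%:M.
  rewrite mulmxDr mulmxDl !mulmxBr mul1mx !mul_mx_scalar scalemx1 scalerBl scale1r.
  by rewrite -!addrA; congr (_ + _); rewrite addrC -!addrA addKr.
by rewrite AA add0r -[q%:M]scalemx1 scalerA mulVf // scalemx1.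
Qed.

End Modules.

Section GensD.
Local Set Implicit Arguments. Local Unset Strict Implicit.
Variables (K : fieldType) (d : nat) (T : nat -> 'M[K]_d).

Lemma gensD_T0T1T0 m : T 0 *m T 1 *m T 0 \in gensD m T.
Proof. exact: mem_head. Qed.

Lemma gensD_T m i : (0 < i < m)%N -> T i \in gensD m T.
Proof. by case/andP=> i0 im; rewrite inE map_f ?orbT // mem_iota; lia. Qed.

Lemma gensD_memP m g : g \in gensD m T ->
  g = T 0 *m T 1 *m T 0 \/ exists2 i, (0 < i < m)%N & g = T i.
Proof.
rewrite inE => /orP [/eqP ->|/mapP [i]]; [by left | rewrite mem_iota => /andP [i0 im] ->].
by right; exists i => //; lia.
Qed.

Lemma gensD_pred m : {subset gensD m.-1 T <= gensD m T}.
Proof.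
move=> g /gensD_memP [->|[i /andP [i0 im] ->]]; first exact: gensD_T0T1T0.
by apply: gensD_T; lia.
Qed.

End GensD.

Lemma twist_comm_D2 (K : fieldType) d (T : nat -> 'M[K]_d) (U : 'M[K]_d) :
  repB (-1) 2 T -> simple_sub (gensD 2 T) U ->
  U *m (T 0 *m T 1 *m T 0) *m T 0 = U *m T 0 *m (T 0 *m T 1 *m T 0).
Proof.
case=> T0 Tq Tb _ _ HU; have T00 := T0 isT.
set u := T 0 *m T 1 *m T 0.
have gens2 : gensD 2 T = [:: u; T 1] by [].
have uT1 : comm_mx u (T 1) by rewrite /comm_mx /u Tb // !mulmxA.
have comm2 A : A \in gensD 2 T -> forall g, g \in gensD 2 T -> comm_mx A g.
  rewrite gens2 !inE => /orP [] /eqP -> g; rewrite !inE => /orP [] /eqP ->;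
    by [exact: comm_mx_refl | exact: uT1 | exact: comm_mx_sym].
have T1sq : (T 1 + 1%:M) *m (T 1 + 1%:M) = 0.
  by have := Tq 1 isT; rewrite raddfN opprK.
have usq : (u + 1%:M) *m (u + 1%:M) = 0.
  have -> : u + 1%:M = T 0 *m (T 1 + 1%:M) *m T 0.
    by rewrite mulmxDr mulmx1 mulmxDl T00.
  rewrite !mulmxA -[_ *m T 0 *m T 0]mulmxA T00 mulmx1.
  by rewrite -[T 0 *m _ *m _]mulmxA T1sq mulmx0 mul0mx.
have uD : u \in gensD 2 T by rewrite gens2 mem_head.
have T1D : T 1 \in gensD 2 T by rewrite gens2 !inE eqxx orbT.
rewrite (simple_sub_unipotent HU uD (comm2 _ uD) usq) mulNmx.
have -> : U *m T 0 *m u = U *m T 1 *m T 0.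
  by rewrite /u !mulmxA -[U *m T 0 *m T 0]mulmxA T00 mulmx1.
by rewrite (simple_sub_unipotent HU T1D (comm2 _ T1D) T1sq) mulNmx.
Qed.

Fixpoint jm {K : fieldType} {d : nat} (T : nat -> 'M[K]_d) (k : nat) : 'M[K]_d :=
  if k is k'.+1 then T k *m jm T k' *m T k else T 0.

Section Hecke.
Local Set Implicit Arguments. Local Unset Strict Implicit.
Variables (K : fieldType) (q : K) (n d : nat) (T : nat -> 'M[K]_d).
Hypothesis HB : repB q n T.

Lemma T_comm i j : (i.+1 < j)%N -> (j < n)%N -> comm_mx (T i) (T j).
Proof. by case: HB => _ _ _ _ Tc ij jn; apply: Tc. Qed.

Lemma T_unitmx i : q != 0 -> (i < n)%N -> T i \in unitmx.
Proof.
case: HB => T0 Tq _ _ _ q0; case: i => [n0|i iN].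
  by case/mulmx1_unit: (T0 n0).
by apply: unitmx_quadratic q0 _; apply: Tq.
Qed.

Lemma gensD_conj_T0 g :
  (1 < n)%N -> g \in gensD n T -> T 0 *m g *m T 0 \in gensD n T.
Proof.
case: HB => T0 _ _ _ _ n1; have T00 := T0 (ltnW n1).
case/gensD_memP=> [->|[[|[|i]] // /andP [_ iN] ->]].
- by rewrite !mulmxA T00 mul1mx -mulmxA T00 mulmx1 gensD_T ?n1.
- exact: gensD_T0T1T0.
by rewrite T_comm // -mulmxA T00 mulmx1 gensD_T ?iN.
Qed.

Lemma cap_twist_eq0 (U V : 'M[K]_d) :
  (1 < n)%N -> simple_sub (gensB n T) 1%:M -> simple_sub (gensD n T) U ->
  (0 < \rank V)%N -> (U :&: V)%MS = 0 -> (U *m T 0 :&: U <= (0 : 'M[K]_d))%MS.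
Proof.
move=> n1 [_ _ Bmin] [HU Upos Umin] Vpos UV0.
case: HB => T0 _ _ _ _; have T00 := T0 (ltnW n1).
have HUT := invariant_conj T00 (fun g => gensD_conj_T0 n1) HU.
case: (Umin _ (invariant_cap HUT HU) (capmxSr _ _)) => [/eqmx0P -> //|UUT].
have UT_U : (U *m T 0 <= U)%MS.
  by rewrite -{2}[U]mulmx1 -T00 mulmxA submxMr // (submx_trans UUT) ?capmxSl.
have HUB : Defs.invariant (gensB n T) U.
  apply/allP=> g /mapP [[|i]]; rewrite mem_iota add0n => /andP [_ iN] -> //.
  by apply: (allP HU); apply: gensD_T; lia.
case: (Bmin U HUB (submx1 U)) => [/eqmx0P U0|UU].
  by move: Upos; rewrite U0 mxrank0.
have : (V <= U :&: V)%MS by rewrite sub_capmx submx_refl andbT (submx_trans (submx1 V)).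
by rewrite UV0 => /submx0null V0; move: Vpos; rewrite V0 mxrank0.
Qed.

Lemma jm_comm_high k j : (k.+1 < j)%N -> (j < n)%N -> comm_mx (T j) (jm T k).
Proof.
elim: k j => [|k IH] j kj jn /=; first exact/comm_mx_sym/T_comm.
have Tkj : comm_mx (T j) (T k.+1) by apply/comm_mx_sym/T_comm.
by do 2?apply: comm_mxM => //; apply: IH (ltnW kj) jn.
Qed.

Lemma jm_comm_T0 k : (0 < k < n)%N -> comm_mx (T 0) (jm T k).
Proof.
elim: k => [|[|k] IH] // /andP [_ kn].
  by case: HB => _ _ Tb _ _; rewrite /comm_mx /= !mulmxA Tb.
have T0k := @T_comm 0 k.+2 isT kn.
by do 2?apply: comm_mxM => //; apply: IH; rewrite /= ltnW.
Qed.

Lemma jm_comm_low i k : (0 < i < k)%N -> (k < n)%N -> comm_mx (T i) (jm T k).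
Proof.
elim: k => [|k IH] /andP [i0 ik] kn; first by rewrite ltn0 in ik.
rewrite ltnS leq_eqVlt in ik; case/orP: ik => [/eqP Eik|ik]; last first.
  have Tik : comm_mx (T i) (T k.+1) by apply: T_comm.
  by do 2?apply: comm_mxM => //; apply: IH; rewrite ?i0 // ltnW.
subst i; case: k i0 kn {IH} => // k _ kn /=.
have Tbr : T k.+1 *m T k.+2 *m T k.+1 = T k.+2 *m T k.+1 *m T k.+2.
  by case: HB => _ _ _ Tbr _; apply: Tbr.
have braid : forall Y : 'M[K]_d, T k.+1 *m (T k.+2 *m (T k.+1 *m Y)) =
                       T k.+2 *m (T k.+1 *m (T k.+2 *m Y)).
  by move=> Y; rewrite !mulmxA Tbr.
have Jk : forall Y : 'M[K]_d, T k.+2 *m (jm T k *m Y) = jm T k *m (T k.+2 *m Y).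
  by move=> Y; rewrite !mulmxA (@jm_comm_high k k.+2 (leqnn _) kn).
rewrite /comm_mx -!mulmxA braid Jk [T k.+2 *m (T k.+1 *m T k.+2)]mulmxA.
by rewrite -Tbr -!mulmxA.
Qed.

Lemma jm_unitmx k : q != 0 -> (k < n)%N -> jm T k \in unitmx.
Proof.
move=> q0; elim: k => [|k IH] kn /=; first exact: T_unitmx.
by rewrite !unitmx_mul T_unitmx // IH // ltnW.
Qed.

Lemma jm_T0_stable (U : 'M[K]_d) k :
  Defs.invariant (gensD n T) U -> (0 < k < n)%N -> stablemx U (T 0 *m jm T k).
Proof.
move=> HU; elim: k => [|[|k] IH] // /andP [_ kn].
  have -> : U *m (T 0 *m jm T 1) = U *m (T 0 *m T 1 *m T 0) *m T 1.
    by rewrite /= !mulmxA.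
  apply: (invariant_submx HU); first by apply: gensD_T; lia.
  exact/(allP HU)/gensD_T0T1T0.
have Tk_gens : T k.+2 \in gensD n T by apply: gensD_T; lia.
have -> : U *m (T 0 *m jm T k.+2) = U *m T k.+2 *m (T 0 *m jm T k.+1) *m T k.+2.
  have -> : jm T k.+2 = T k.+2 *m jm T k.+1 *m T k.+2 by [].
  move: (jm T k.+1) => J; rewrite !mulmxA -[U *m T 0 *m T k.+2]mulmxA.
  by rewrite (@T_comm 0 k.+2 isT kn) mulmxA.
apply: (invariant_submx HU Tk_gens); apply: submx_trans (IH _); last by rewrite /= ltnW.
exact/submxMr/(allP HU).
Qed.

Lemma jm_twist_sub (U : 'M[K]_d) :
  (1 < n)%N -> Defs.invariant (gensD n T) U -> (U *m jm T n.-1 <= U *m T 0)%MS.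
Proof.
move=> n1 HU; case: HB => T0 _ _ _ _.
have T0J : comm_mx (T 0) (jm T n.-1) by apply: jm_comm_T0; lia.
have -> : jm T n.-1 = T 0 *m jm T n.-1 *m T 0.
  by rewrite T0J -mulmxA T0 ?mulmx1 //; lia.
by rewrite mulmxA submxMr // jm_T0_stable //; lia.
Qed.

Lemma jm_comm_gensD g : (2 < n)%N -> g \in gensD n.-1 T -> comm_mx g (jm T n.-1).
Proof.
move=> n2 /gensD_memP [->|[i i_range ->]]; last by apply: jm_comm_low; lia.
have T0J : comm_mx (T 0) (jm T n.-1) by apply: jm_comm_T0; lia.
have T1J : comm_mx (T 1) (jm T n.-1) by apply: jm_comm_low; lia.
by apply/comm_mx_sym/comm_mxM; [apply: comm_mxM|]; apply/comm_mx_sym.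
Qed.

Lemma exists_twisting_element :
  q != 0 -> (1 < n)%N -> (n = 2 -> q = -1) ->
  exists2 X : 'M[K]_d, X \in unitmx &
    forall U, simple_sub (gensD n T) U ->
      (U *m X <= U *m T 0)%MS /\
      forall g, g \in gensD n.-1 T -> U *m g *m X = U *m X *m g.
Proof.
move=> q0 n1 n2q; have [n2|n_ne2] := eqVneq n 2.
  exists (T 0); first by apply: T_unitmx q0 _; lia.
  have HB2 : repB (-1) 2 T by move: HB; rewrite (n2q n2) n2.
  move=> U; rewrite n2 => HU; split=> // g.
  by case/gensD_memP=> [->|[i /andP [i0 i1] _]]; [exact: twist_comm_D2 | lia].
have n2 : (2 < n)%N by lia.
exists (jm T n.-1); first by apply: jm_unitmx; lia.
move=> U [HU _ _]; split; first exact: jm_twist_sub.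
by move=> g Hg; rewrite -!mulmxA (jm_comm_gensD n2 Hg).
Qed.

End Hecke.

Theorem theorem3p10 (K : fieldType) (q : K) (n : nat) :
  q != 0 ->
  (2%:R : K) != 0 ->
  \prod_(1 <= i < n) (1 + q ^+ i) = 0 ->
  split_HD q n -> split_HD q n.-1 ->
  forall d (T : nat -> 'M[K]_d),
    repB q n T ->
    simple_sub (gensB n T) 1%:M ->
    sigma_stable n T ->
    forall Dp Dm : 'M[K]_d,
      simple_sub (gensD n T) Dp -> simple_sub (gensD n T) Dm ->
      (Dp :&: Dm == (0 : 'M[K]_d))%MS -> (Dp + Dm == (1%:M : 'M[K]_d))%MS ->
      ~ modiso (gensD n T) Dp Dm ->
      forall Wp Wm : 'M[K]_d,
        is_socle (gensD n.-1 T) Dp Wp -> is_socle (gensD n.-1 T) Dm Wm ->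
        modiso (gensD n.-1 T) Wp Wm.
Proof.
move=> q0 _ prod0 _ _ d T HB HsB _ Dp Dm HDp HDm /eqmx0P DpDm0 DpDm1 _ Wp Wm HWp HWm.
have n1 : (1 < n)%N.
  rewrite ltnNge; apply/negP=> n_le1.
  by move: prod0; rewrite big_geq // => /eqP; rewrite oner_eq0.
have n2q : n = 2 -> q = -1.
  move=> n2; move: prod0; rewrite n2 big_nat1 expr1 addrC => /eqP.
  by rewrite addr_eq0 => /eqP.
have [X Xu HX] := exists_twisting_element HB q0 n1 n2q.
have [[HDp_inv Dp_pos _] [HDm_inv Dm_pos _]] := (HDp, HDm).
have DmDp0 : (Dm :&: Dp)%MS = 0 by rewrite capmxC.
have capX (U V : 'M[K]_d) :
    simple_sub (gensD n T) U -> (0 < \rank V)%N -> (U :&: V)%MS = 0 ->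
    (U *m X :&: U <= (0 : 'M[K]_d))%MS.
  move=> HU Vpos UV0; apply: (submx_trans _ (cap_twist_eq0 HB n1 HsB HU Vpos UV0)).
  exact: capmxS (HX U HU).1 (submx_refl U).
apply: (modiso_socle_twist DpDm0 DpDm1 HDp_inv HDm_inv (@gensD_pred _ _ T n) Xu) HWp HWm.
- exact: capX HDp Dm_pos DpDm0.
- exact: capX HDm Dp_pos DmDp0.
- exact: (HX Dp HDp).2.
- exact: (HX Dm HDm).2.
Qed.
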